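(* Let $n\geq4$, $k\geq3$, and consider the single braided Coxeter group $W^n_k$ with generators $s_1,\dots,s_n$. For all $\lambda\in\mathbb{N}_0$ and $1\le r\le n$, the element represented by $\mathbf{s}=(s_1s_2\cdots s_n)^\lambda s_1\cdots s_r$ satisfies \[ l_R(\omega(\mathbf{s}))\leq \lambda(n-2)+r-2\cdot\mathbf{1}_{(\lambda+\mathbf{1}_{r\geq 2})\geq k}\cdot\left(1+\left\lfloor\frac{\lambda-k+\mathbf{1}_{r\geq2}}{k-1}\right\rfloor\right). \]
   Context: $W^n_k=\langle s_1,\dots,s_n\mid s_i^2=(s_is_j)^{k}=1\ \forall i\neq j\rangle$. $\omega$ maps a word over $\{s_1,\dots,s_n\}$ to the element it represents. $l_R$ is the reflection length: minimal number of reflections (conjugates of generators) whose product is the element. For a condition $P$, $\mathbf{1}_P$ equals $1$ if $P$ holds and $0$ otherwise. *)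

From mathcomp Require Import all_boot all_order all_algebra.
From mathcomp Require Import boolp.
Unset Printing Implicit Defensive.

(* Words over the generators s_1..s_n; the letter (i : 'I_n) stands for s_(i+1). *)
Definition word (n : nat) := seq 'I_n.

(* The congruence on words defining W^n_k = < s_1..s_n | s_i^2 = (s_i s_j)^k = 1 (i<>j) >:
   two words are equivalent iff they represent the same element, i.e. omega u = omega v. *)
Inductive weq (n k : nat) : word n -> word n -> Prop :=
| weq_refl u : weq n k u u
| weq_sym u v : weq n k u v -> weq n k v u
| weq_trans u v w : weq n k u v -> weq n k v w -> weq n k u w
| weq_ctx (a b u v : word n) : weq n k u v -> weq n k (a ++ u ++ b) (a ++ v ++ b)
| weq_sq (i : 'I_n) : weq n k [:: i; i] [::]
| weq_braid (i j : 'I_n) : i != j -> weq n k (flatten (nseq k [:: i; j])) [::].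

(* A reflection is a conjugate g s_i g^{-1}; since generators are involutions,
   g^{-1} is represented by the reversed word. *)
Definition is_reflection (n : nat) (t : word n) : Prop :=
  exists (g : word n) (i : 'I_n), t = g ++ [:: i] ++ rev g.

Definition refl_fact (n k : nat) (w : word n) (m : nat) : Prop :=
  exists ts : seq (word n),
    [/\ size ts = m, (forall t, t \in ts -> is_reflection n t) & weq n k (flatten ts) w].

Lemma refl_fact_ex (n k : nat) (w : word n) : exists m, `[< refl_fact n k w m >].
Proof.
exists (size w); apply/asboolP; exists [seq [:: i] | i <- w]; split.
- by rewrite size_map.
- move=> t /mapP [i _ ->]; by exists [::], i.
- have -> : flatten [seq [:: i] | i <- w] = w by elim: w => //= a w ->.
  exact: weq_refl.
Qed.

Definition reflection_length (n k : nat) (w : word n) : nat :=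
  ex_minn (refl_fact_ex n k w).

Definition coxeter_power_word (n lambda r : nat) : word n :=
  flatten (nseq lambda (enum 'I_n)) ++ take r (enum 'I_n).

(* Write A = s_1 s_2 and B = s_3 s_4. Deleting a letter costs at most one
   reflection, because l_R(x y z) <= l_R(x z) + l_R(y) (conjugate by x the
   reflections of y). Deleting s_5 .. s_n from every period, and the tail
   beyond s_2, leaves (A B)^lambda followed by s_1 or by A. A block
   X (X Y)^(k-2) X with X, Y in {A, B} costs 2(k-2) reflections, since deleting
   its copies of Y leaves X^k = 1, and such blocks nest into alternating words
   X Y X ... X of length 2(k-1)m + 1 costing 2(k-2)m + 2. What remains of
   (A B)^lambda is absorbed next to a repeated letter A A, using that words in
   two letters s_i, s_j have l_R <= 2. The correction term of the theorem
   equals 2 floor((lambda + 1_{r>=2} - 1)/(k-1)). *)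

From mathcomp Require Import all_boot all_order all_algebra.
Import Order.TTheory GRing.Theory Num.Theory.
From mathcomp Require Import boolp zify.

Arguments weq_refl {n k}.
Arguments weq_sym {n k u v}.
Arguments weq_trans {n k u v w}.
Arguments weq_ctx {n k}.
Arguments weq_sq {n k}.
Arguments weq_braid {n k}.

Section ReflectionLength.
Context {n k : nat}.
Local Notation weq := (weq n k).
Local Notation lR := (reflection_length n k).

Lemma weq_cat {u u' v v' : word n} : weq u u' -> weq v v' -> weq (u ++ v) (u' ++ v').
Proof.
move=> eu ev; apply: weq_trans (weq_ctx [::] v _ _ eu) _.
by have := weq_ctx u' [::] _ _ ev; rewrite !cats0.
Qed.

Lemma weq_cat_rev (x : word n) : weq (x ++ rev x) [::].
Proof.
elim: x => [|i x IHx]; first exact: weq_refl.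
rewrite rev_cons -cats1 /= catA.
by apply: weq_trans (weq_ctx [:: i] [:: i] _ _ IHx) (weq_sq i).
Qed.

Lemma weq_rev_cat (x : word n) : weq (rev x ++ x) [::].
Proof. by have := weq_cat_rev (rev x); rewrite revK. Qed.

Lemma weq_conj_flatten (x : word n) (ts : seq (word n)) :
  weq (flatten [seq x ++ t ++ rev x | t <- ts]) (x ++ flatten ts ++ rev x).
Proof.
elim: ts => [|t ts IHts] /=; first exact: weq_sym (weq_cat_rev x).
apply: weq_trans (weq_cat (weq_refl _) IHts) _.
have := weq_ctx (x ++ t) (flatten ts ++ rev x) _ _ (weq_rev_cat x).
by rewrite -!catA.
Qed.

Lemma refl_fact_weq {u v : word n} {d} : weq u v -> refl_fact n k u d -> refl_fact n k v d.
Proof. by move=> euv [ts [sz refl eu]]; exists ts; split=> //; apply: weq_trans eu euv. Qed.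

Lemma refl_fact_size (w : word n) : refl_fact n k w (size w).
Proof.
exists [seq [:: i] | i <- w]; split; first by rewrite size_map.
  by move=> t /mapP [i _ ->]; exists [::], i.
have -> : flatten [seq [:: i] | i <- w] = w by elim: w => //= i w ->.
exact: weq_refl.
Qed.

Lemma refl_fact_insert (x y z : word n) a b :
  refl_fact n k (x ++ z) a -> refl_fact n k y b -> refl_fact n k (x ++ y ++ z) (b + a).
Proof.
move=> [ts [sz_ts refl_ts e_ts]] [us [sz_us refl_us e_us]].
exists ([seq x ++ u ++ rev x | u <- us] ++ ts); split.
- by rewrite size_cat size_map sz_ts sz_us.
- move=> t; rewrite mem_cat => /orP [/mapP [u /refl_us [g [i ->]] ->]|/refl_ts //].
  by exists (x ++ g), i; rewrite rev_cat !catA.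
rewrite flatten_cat.
apply: weq_trans (weq_cat (weq_conj_flatten x us) e_ts) _.
have e_y := weq_ctx x (rev x ++ x ++ z) _ _ e_us.
have e_x := weq_ctx (x ++ y) z _ _ (weq_rev_cat x).
by rewrite -!catA /= in e_y e_x *; apply: weq_trans e_y e_x.
Qed.

Lemma refl_fact_lR (w : word n) : refl_fact n k w (lR w).
Proof. by rewrite /reflection_length; case: ex_minnP => m /asboolP. Qed.

Lemma lR_min (w : word n) d : refl_fact n k w d -> lR w <= d.
Proof. by rewrite /reflection_length; case: ex_minnP => m _ min_m /(asboolP _)/min_m. Qed.

Lemma lR_weq (u v : word n) : weq u v -> lR u = lR v.
Proof.
move=> euv; apply/eqP; rewrite eqn_leq; apply/andP; split; apply: lR_min.
  exact: refl_fact_weq (weq_sym euv) (refl_fact_lR v).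
exact: refl_fact_weq euv (refl_fact_lR u).
Qed.

Lemma lR_size (w : word n) : lR w <= size w.
Proof. exact/lR_min/refl_fact_size. Qed.

Lemma lR_weq_nil (w : word n) : weq w [::] -> lR w = 0.
Proof. by move/lR_weq ->; apply/eqP; rewrite -leqn0 lR_size. Qed.

Lemma lR_insert (x y z : word n) : lR (x ++ y ++ z) <= lR (x ++ z) + lR y.
Proof. by rewrite addnC; apply/lR_min/refl_fact_insert; apply: refl_fact_lR. Qed.

Lemma lR_delete (x y z : word n) : lR (x ++ y ++ z) <= lR (x ++ z) + size y.
Proof. by apply: leq_trans (lR_insert x y z) _; rewrite leq_add2l lR_size. Qed.

End ReflectionLength.

Section Powers.
Context {n k : nat}.
Local Notation lR := (reflection_length n k).

Definition wpow (X : word n) (t : nat) : word n := flatten (nseq t X).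

Lemma wpowD (X : word n) s t : wpow X (s + t) = wpow X s ++ wpow X t.
Proof. by rewrite /wpow nseqD flatten_cat. Qed.

Lemma wpowSr (X : word n) t : wpow X t.+1 = wpow X t ++ X.
Proof. by rewrite -addn1 wpowD /wpow /= cats0. Qed.

Lemma wpow_rot (X Y : word n) t : X ++ wpow (Y ++ X) t = wpow (X ++ Y) t ++ X.
Proof. by elim: t => [|t IHt]; rewrite ?cats0 // /wpow /= -/(wpow _ t) -!catA IHt. Qed.

Lemma lR_wpow_delete (H O x z : word n) t :
  lR (x ++ wpow (H ++ O) t ++ z) <= lR (x ++ wpow H t ++ z) + t * size O.
Proof.
elim: t x => [|t IHt] x; first by rewrite addn0.
have := IHt (x ++ H ++ O); rewrite /wpow /= -/(wpow _ t) -!catA => IH.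
apply: leq_trans IH _; rewrite mulSn addnA leq_add2r.
by have := lR_delete (x ++ H) O (wpow H t ++ z); rewrite -!catA.
Qed.

Lemma lR_dihedral_odd (i j : 'I_n) t : lR (wpow [:: i; j] t ++ [:: i]) <= 1.
Proof.
elim: t i j => [|t IHt] i j; first exact: lR_size.
have -> : wpow [:: i; j] t.+1 ++ [:: i] = [:: i] ++ (wpow [:: j; i] t ++ [:: j]) ++ [:: i].
  have rot := wpow_rot [:: i] [:: j] t; rewrite /= in rot.
  by rewrite wpowSr -!catA /= -cat_cons rot -catA.
apply: leq_trans (lR_insert _ _ _) _.
by rewrite lR_weq_nil ?add0n //; exact: weq_sq.
Qed.

Lemma lR_dihedral_even (i j : 'I_n) t : lR (wpow [:: i; j] t) <= 2.
Proof.
case: t => [|t]; first by rewrite lR_weq_nil //; exact: weq_refl.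
have -> : wpow [:: i; j] t.+1 = [::] ++ (wpow [:: i; j] t ++ [:: i]) ++ [:: j].
  by rewrite wpowSr -catA.
apply: leq_trans (lR_insert _ _ _) _.
exact: leq_add (lR_size _) (lR_dihedral_odd _ _ _).
Qed.

Lemma lR_braid_interleave (i j : 'I_n) (O : word n) : 2 <= k -> i != j ->
  lR ([:: i; j] ++ wpow ([:: i; j] ++ O) (k - 2) ++ [:: i; j]) <= (k - 2) * size O.
Proof.
move=> k2 ij; apply: leq_trans (lR_wpow_delete _ _ _ _ _) _.
have -> : [:: i; j] ++ wpow [:: i; j] (k - 2) ++ [:: i; j] = wpow [:: i; j] k.
  by rewrite -wpowSr -[in RHS](subnK k2) addn2.
by rewrite lR_weq_nil //; exact: weq_braid.
Qed.

End Powers.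

Section Alternating.
Context {n k : nat}.
Local Notation lR := (reflection_length n k).

Fixpoint alternate (X Y : word n) (m : nat) : word n :=
  if m is m'.+1 then X ++ alternate Y X m' else [::].

Lemma alternate_double (X Y : word n) t l :
  alternate X Y (2 * t + l) = wpow (X ++ Y) t ++ alternate X Y l.
Proof. by elim: t => [|t IHt] //; rewrite mulnS !addSn /= IHt -!catA. Qed.

Lemma alternate_odd_cat (X Y : word n) t l :
  alternate X Y (2 * t + 1 + l) = wpow (X ++ Y) t ++ X ++ alternate Y X l.
Proof. by rewrite -addnA alternate_double add1n. Qed.

Lemma alternate_odd (X Y : word n) t : alternate X Y (2 * t + 1) = wpow (X ++ Y) t ++ X.
Proof. by rewrite -[2 * t + 1]addn0 alternate_odd_cat cats0. Qed.

Lemma lR_alternate (a b c d : 'I_n) m : 2 <= k -> a != b -> c != d ->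
  lR (alternate [:: a; b] [:: c; d] (2 * (k - 1) * m + 1)) <= 2 * (k - 2) * m + 2.
Proof.
move=> k2; elim: m a b c d => [|m IHm] a b c d ab cd.
  by rewrite !muln0; exact: lR_size.
set X := [:: a; b]; set Y := [:: c; d].
have -> : alternate X Y (2 * (k - 1) * m.+1 + 1) =
          X ++ alternate Y X (2 * (k - 1) * m + 1) ++ wpow (X ++ Y) (k - 2) ++ X.
  have -> : 2 * (k - 1) * m.+1 + 1 = (2 * ((k - 1) * m) + 1 + (2 * (k - 2) + 1)).+1.
    by rewrite mulnS; lia.
  by rewrite -[LHS]/(X ++ alternate Y X _) -mulnA alternate_odd_cat !alternate_odd -catA.
apply: leq_trans (lR_insert _ _ _) _.
have := leq_add (lR_braid_interleave _ _ Y k2 ab) (IHm c d a b cd ab).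
by move/leq_trans; apply; rewrite /= !mulnS; lia.
Qed.

End Alternating.

Section TwoBraidPairs.
Context {n k : nat} (a b c d : 'I_n).
Hypotheses (k2 : 2 <= k) (ab : a != b) (cd : c != d).
Local Notation lR := (reflection_length n k).
Local Notation A := [:: a; b].
Local Notation B := [:: c; d].

(* The alternating block [B A ... B] is inserted right after the leading [A],
   where it meets the defect [A A] of [A (A B)^t]. *)
Lemma lR_wpow_defect m t (T : word n) :
  lR (wpow (A ++ B) ((k - 1) * m + 1 + t) ++ T) <=
  2 * t + lR (wpow A t.+1 ++ T) + (2 * (k - 2) * m + 2).
Proof.
have -> : wpow (A ++ B) ((k - 1) * m + 1 + t) ++ T =
          A ++ alternate B A (2 * (k - 1) * m + 1) ++ wpow (A ++ B) t ++ T.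
  rewrite -addnA add1n wpowD -mulnA alternate_odd -!catA.
  by rewrite [LHS]catA -wpow_rot -catA.
apply: leq_trans (lR_insert _ _ _) _.
apply: leq_add; last exact: lR_alternate.
apply: leq_trans (lR_wpow_delete _ _ A _ _) _.
by rewrite addnC mulnC.
Qed.

Lemma lR_wpow_cat_pair l :
  lR (wpow (A ++ B) l ++ A) + 2 * (l %/ (k - 1)) <= 2 * l + 2.
Proof.
move: (divn_eq l (k - 1)).
move: (l %/ (k - 1)) (l %% (k - 1)) => q [|rho] ->.
  have := lR_alternate a b c d q k2 ab cd.
  rewrite -mulnA alternate_odd addn0 mulnC; nia.
rewrite (_ : q * (k - 1) + rho.+1 = (k - 1) * q + 1 + rho); last by lia.
have := lR_wpow_defect q rho A; rewrite -wpowSr.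
have := lR_dihedral_even (k := k) a b rho.+2; nia.
Qed.

Lemma lR_wpow_cat_letter l :
  lR (wpow (A ++ B) l ++ [:: a]) + 2 * (l.-1 %/ (k - 1)) <= 2 * l + 1.
Proof.
case: l => [|l]; first by rewrite div0n addn0; exact: lR_size.
rewrite [l.+1.-1]/=; move: (divn_eq l (k - 1)).
move: (l %/ (k - 1)) (l %% (k - 1)) => q rho ->.
rewrite (_ : (q * (k - 1) + rho).+1 = (k - 1) * q + 1 + rho); last by lia.
have := lR_wpow_defect q rho [:: a].
have := lR_dihedral_odd (k := k) a b rho.+1; nia.
Qed.

End TwoBraidPairs.

Lemma enum_ord_split4 {n} : 4 <= n -> exists (a b c d : 'I_n) (rest : seq 'I_n),
  enum 'I_n = [:: a, b, c, d & rest] /\ [/\ a != b, c != d & size rest = n - 4].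
Proof.
move=> n4; move: (enum_uniq 'I_n) (size_enum_ord n).
case: (enum 'I_n) => [|a [|b [|c [|d rest]]]] //=; try by move=> _ szn; rewrite -szn in n4.
rewrite !inE !negb_or => /and5P [/and4P [ab _ _ _] /and3P [_ _ _] /andP [cd _] _ _] szn.
by exists a, b, c, d, rest; split=> //; split=> //; lia.
Qed.

Lemma lR_coxeter_power_word n k l r : 4 <= n -> 2 <= k -> 0 < r -> r <= n ->
  reflection_length n k (coxeter_power_word n l r) + 2 * ((l + (1 < r)).-1 %/ (k - 1))
  <= l * (n - 2) + r.
Proof.
move=> n4 k2 r0 rn.
have [a [b [c [d [rest [enum_n [ab cd sz_rest]]]]]]] := enum_ord_split4 n4.
have del_rest T : reflection_length n k (wpow (([:: a; b] ++ [:: c; d]) ++ rest) l ++ T)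
    <= reflection_length n k (wpow ([:: a; b] ++ [:: c; d]) l ++ T) + l * (n - 4).
  by rewrite -sz_rest; apply: (lR_wpow_delete _ _ [::]).
rewrite /coxeter_power_word enum_n -/(wpow (([:: a; b] ++ [:: c; d]) ++ rest) l).
case: r r0 rn => [|[|r]] // _ rn.
  have := del_rest [:: a]; have := lR_wpow_cat_letter a b c d k2 ab cd l.
  rewrite /= addn0; nia.
have := lR_delete (k := k) (wpow (([:: a; b] ++ [:: c; d]) ++ rest) l ++ [:: a; b])
  (take r [:: c, d & rest]) [::].
rewrite !cats0 -catA size_take_min.
have := del_rest [:: a; b]; have := lR_wpow_cat_pair a b c d k2 ab cd l.
have := geq_minl r (size rest).+2; rewrite addn1 /=; nia.
Qed.

Lemma if_leq_div_pred k l : 2 <= k ->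
  (if k <= l then 2 * (1 + (l - k) %/ (k - 1)) else 0) = 2 * (l.-1 %/ (k - 1)).
Proof.
move=> k2; case: leqP => [kl | lk]; last by rewrite divn_small //; lia.
by rewrite -divnMDl ?mul1n; [congr (_ * (_ %/ _)); lia | lia].
Qed.

Local Open Scope ring_scope.

Theorem mainTheorem14 (n k lambda r : nat) :
  (4 <= n)%N -> (3 <= k)%N -> (1 <= r)%N -> (r <= n)%N ->
  (reflection_length n k (coxeter_power_word n lambda r))%:Z <=
  (lambda * (n - 2) + r)%N%:Z
  - (if (k <= lambda + (1 < r))%N
     then (2 * (1 + (lambda + (1 < r) - k) %/ (k - 1)))%N
     else 0%N)%:Z.
Proof.
move=> n4 /ltnW k2 r1 rn.
rewrite lerBrDr -PoszD lez_nat if_leq_div_pred //.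
exact: lR_coxeter_power_word.
Qed.
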